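(* Suppose $\mathcal{H}$ and $\mathcal{H}'$ are hereditary graph properties and $\mathcal{H}$ is close to $\mathcal{H}'$. Then $M_{\mathcal{H}}(2\epsilon)\leq M_{\mathcal{H}'}(\epsilon)$ for every $\epsilon\in(0,1/2)$.
   Context: Graphs $G=(V,E)$ with $E\subseteq\binom V2$; $\overline E=\{(x,y)\in V^2:xy\in E\}$. A hereditary graph property is a class of finite graphs closed under isomorphism and induced subgraphs. $d_G(X,Y)=|\overline E\cap(X\times Y)|/(|X||Y|)$. A pair $(X,Y)$ is $\epsilon$-regular if $|d_G(X,Y)-d_G(X',Y')|\le\epsilon$ for all $X'\subseteq X,Y'\subseteq Y$ with $|X'|\ge\epsilon|X|,|Y'|\ge\epsilon|Y|$; a partition $\mathcal P$ of $V$ is $\epsilon$-regular if at least $(1-\epsilon)|V|^2$ pairs of $V^2$ lie in $X\times Y$ for some $\epsilon$-regular $(X,Y)\in\mathcal P^2$. $M_{\mathcal H}(\epsilon)$ is the least $M$ such that all sufficiently large graphs in $\mathcal H$ have an $\epsilon$-regular partition with at most $M$ parts. Graphs $G=(V,E)$, $G'=(V,E')$ on the same vertex set are $\delta$-close if $|\overline E\Delta\overline{E'}|\le\delta|V|^2$. $\mathcal H$ is close to $\mathcal H'$ if for all $\delta>0$ there is $N$ such that every $G\in\mathcal H$ with at least $N$ vertices is $\delta$-close to some $G'\in\mathcal H'$ on the same vertex set. *)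

From HB Require Import structures.
From mathcomp Require Import all_boot all_order all_algebra.
From mathcomp Require Import boolp.
From mathcomp Require Import reals.

Set Implicit Arguments.
Unset Strict Implicit.
Unset Printing Implicit Defensive.

Import Order.TTheory GRing.Theory Num.Theory.
Local Open Scope ring_scope.

(* A finite simple graph on the vertex type T : finType, given by its
   adjacency relation e (xy \in E iff e x y). *)
Definition is_graph (T : finType) (e : rel T) : Prop :=
  symmetric e /\ irreflexive e.

Definition graph_property := forall T : finType, rel T -> Prop.

Definition hereditary (H : graph_property) : Prop :=
  (forall (T U : finType) (e : rel T) (e' : rel U) (f : T -> U),
      bijective f -> (forall x y, e' (f x) (f y) = e x y) -> H T e -> H U e') /\
  (forall (T : finType) (e : rel T) (A : {set T}),
      H T e -> H {x : T | x \in A} (fun x y => e (val x) (val y))).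

Section Reg.
Variable R : realType.

Definition density (T : finType) (e : rel T) (X Y : {set T}) : R :=
  (#|[set p in setX X Y | e p.1 p.2]|)%:R / (#|X| * #|Y|)%:R.

Definition regular_pair (T : finType) (e : rel T) (eps : R) (X Y : {set T}) : bool :=
  [forall X' : {set T}, forall Y' : {set T},
     [&& X' \subset X, Y' \subset Y, eps * #|X|%:R <= #|X'|%:R &
         eps * #|Y|%:R <= #|Y'|%:R] ==>
     (`|density e X Y - density e X' Y'| <= eps)].

Definition regular_partition (T : finType) (e : rel T) (eps : R) (P : {set {set T}}) : Prop :=
  partition P [set: T] /\
  (1 - eps) * (#|T| ^ 2)%:R <=
    (#|[set p : T * T | [exists X in P, exists Y in P,
                          [&& p.1 \in X, p.2 \in Y & regular_pair e eps X Y]]]|)%:R.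

Definition reg_bound (H : graph_property) (eps : R) (M : nat) : Prop :=
  exists N : nat, forall (T : finType) (e : rel T),
    is_graph e -> H T e -> (N <= #|T|)%N ->
    exists P : {set {set T}}, regular_partition e eps P /\ (#|P| <= M)%N.

(* M_H(eps): the least such M, or None (= +infinity) if there is none. *)
Definition M_H (H : graph_property) (eps : R) : option nat :=
  match pselect (exists M, `[< reg_bound H eps M >]) with
  | left h => Some (ex_minn h)
  | right _ => None
  end.

Definition graphs_close (T : finType) (e e' : rel T) (delta : R) : Prop :=
  (#|[set p : T * T | e p.1 p.2 != e' p.1 p.2]|)%:R <= delta * (#|T| ^ 2)%:R.

Definition close_to (H H' : graph_property) : Prop :=
  forall delta : R, 0 < delta -> exists N : nat,
    forall (T : finType) (e : rel T), is_graph e -> H T e -> (N <= #|T|)%N ->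
      exists e' : rel T, is_graph e' /\ H' T e' /\ graphs_close e e' delta.

End Reg.

Definition le_ext (a b : option nat) : Prop :=
  match a, b with
  | _, None => True
  | None, Some _ => False
  | Some m, Some n => (m <= n)%N
  end.

(* Regularity survives small edits: if G and G' differ on at most a
   delta-fraction of X x Y, then every density d(X', Y') with
   |X'| >= 2 eps |X|, |Y'| >= 2 eps |Y| moves by at most delta / (4 eps^2).
   Given G in H, pick G' in H' that is eps^4-close to G and an eps-regular
   partition P of G'.  Averaging over the cells X x Y of P^2, the cells on
   which G and G' differ on more than an eps^3-fraction cover at most
   eps |V|^2 pairs; on every other eps-regular cell of G' the pair is
   2 eps-regular for G.  So P itself is a 2 eps-regular partition of G, and
   M_H(2 eps) <= M_H'(eps). *)
From HB Require Import structures.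
From mathcomp Require Import all_boot all_order all_algebra.
From mathcomp Require Import boolp reals.
From mathcomp Require Import ring lra.
Import Order.TTheory GRing.Theory Num.Theory.
Local Open Scope ring_scope.
Set Implicit Arguments.
Unset Strict Implicit.

Section Perturbation.
Variables (R : realType) (T : finType).
Implicit Types (e : rel T) (X Y : {set T}) (P : {set {set T}}).

Definition edge_diff e e' : {set T * T} := [set p | e p.1 p.2 != e' p.1 p.2].

Lemma edge_diffC e e' : edge_diff e' e = edge_diff e e'.
Proof. by apply/setP => p; rewrite !inE eq_sym. Qed.

Lemma card_edges_le_diff e e' X Y :
  (#|[set p in setX X Y | e p.1 p.2]| <=
   #|[set p in setX X Y | e' p.1 p.2]| + #|setX X Y :&: edge_diff e e'|)%N.
Proof.
set A := [set p in _ | e _ _]; set B := [set p in _ | e' _ _].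
rewrite -(cardsID B A) leq_add ?subset_leq_card ?subsetIr //.
apply/subsetP => p; rewrite !inE.
by case: (p.1 \in X); case: (p.2 \in Y); case: (e _ _); case: (e' _ _).
Qed.

Lemma density_diff_le e e' X Y :
  `|density R e X Y - density R e' X Y| <=
    #|setX X Y :&: edge_diff e e'|%:R / (#|X| * #|Y|)%:R.
Proof.
rewrite /density -mulrBl normrM [`|_^-1|]ger0_norm ?invr_ge0 ?ler0n //.
apply: ler_wpM2r; first by rewrite invr_ge0 ler0n.
have := card_edges_le_diff e e' X Y; have := card_edges_le_diff e' e X Y.
rewrite edge_diffC -!(ler_nat R) !natrD => le1 le2.
by rewrite ler_norml; apply/andP; split; lra.
Qed.

Lemma regular_pair_perturb e e' (eps : R) X Y :
  0 < eps -> eps <= 1 / 2 -> (0 < #|X|)%N -> (0 < #|Y|)%N ->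
  #|setX X Y :&: edge_diff e e'|%:R <= eps ^+ 3 * (#|X| * #|Y|)%:R ->
  regular_pair e' eps X Y -> regular_pair e (2 * eps) X Y.
Proof.
move=> eps_gt0 eps_le X_gt0 Y_gt0; rewrite natrM => diff_le /forallP reg'.
apply/forallP => X'; apply/forallP => Y'; apply/implyP.
case/and4P => sX sY X'_ge Y'_ge.
have x_gt0 : 0 < #|X|%:R :> R by rewrite ltr0n.
have y_gt0 : 0 < #|Y|%:R :> R by rewrite ltr0n.
have x'_gt0 : 0 < #|X'|%:R :> R by apply: lt_le_trans X'_ge; rewrite !mulr_gt0.
have y'_gt0 : 0 < #|Y'|%:R :> R by apply: lt_le_trans Y'_ge; rewrite !mulr_gt0.
have reg'_sub : `|density R e' X Y - density R e' X' Y'| <= eps.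
  apply: (implyP (forallP (reg' X') Y')).
  by rewrite sX sY /=; apply/andP; split; [apply: le_trans X'_ge | apply: le_trans Y'_ge]; nra.
have diff_sub : #|setX X' Y' :&: edge_diff e e'|%:R <=
                #|setX X Y :&: edge_diff e e'|%:R :> R.
  by rewrite ler_nat subset_leq_card // setSI // setXS.
have big_sub : 4 * eps ^+ 2 * (#|X|%:R * #|Y|%:R) <= #|X'|%:R * #|Y'|%:R.
  have -> : 4 * eps ^+ 2 * (#|X|%:R * #|Y|%:R) = 2 * eps * #|X|%:R * (2 * eps * #|Y|%:R).
    by ring.
  by apply: ler_pM X'_ge Y'_ge; rewrite ?mulr_ge0 ?ler0n ?ltW.
have perturb_XY : `|density R e X Y - density R e' X Y| <= eps / 4.
  apply: le_trans (density_diff_le _ _ _ _) _.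
  rewrite natrM ler_pdivrMr ?mulr_gt0 //; apply: le_trans diff_le _.
  by rewrite ler_wpM2r ?mulr_ge0 ?ler0n //; nra.
have perturb_X'Y' : `|density R e' X' Y' - density R e X' Y'| <= eps / 4.
  rewrite distrC; apply: le_trans (density_diff_le _ _ _ _) _.
  rewrite natrM ler_pdivrMr ?mulr_gt0 //.
  by apply: le_trans diff_sub _; apply: le_trans diff_le _; rewrite !exprS expr0 in big_sub *; nra.
set d := density R e X Y; set d' := density R e' X Y.
set s' := density R e' X' Y'; set s := density R e X' Y'.
have -> : d - s = (d - d') + (d' - s') + (s' - s) by ring.
by apply: le_trans (ler_normD _ _) _; apply: le_trans (lerD (ler_normD _ _) (lexx _)) _; lra.
Qed.

Definition cell P (p : T * T) : {set T * T} :=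
  setX (pblock P p.1) (pblock P p.2).

Definition heavy_cells P (c : R) (D : {set T * T}) : {set T * T} :=
  [set p | c * #|cell P p|%:R < #|cell P p :&: D|%:R].

Definition regular_cover e (eps : R) P : {set T * T} :=
  [set p | [exists X in P, exists Y in P,
              [&& p.1 \in X, p.2 \in Y & regular_pair e eps X Y]]].

Section PartitionCells.
Variable P : {set {set T}}.
Hypothesis partP : partition P [set: T].

Lemma mem_cell p : p \in cell P p.
Proof. by case/and3P: partP => /eqP coverP _ _; rewrite !inE !mem_pblock coverP !inE. Qed.

Lemma card_cell_gt0 p : (0 < #|cell P p|)%N.
Proof. by apply/card_gt0P; exists p; apply: mem_cell. Qed.

Lemma cell_eq p q : q \in cell P p -> cell P q = cell P p.
Proof.
case/and3P: partP => _ tiP _; rewrite !inE => /andP [q1 q2].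
by rewrite /cell (same_pblock tiP q1) (same_pblock tiP q2).
Qed.

Lemma mem_cellC p q : (q \in cell P p) = (p \in cell P q).
Proof. by apply/idP/idP => /cell_eq ->; apply: mem_cell. Qed.

(* Each q in D contributes 1 / |cell q| to every p of its cell. *)
Lemma sum_cell_fraction (D : {set T * T}) :
  \sum_p (#|cell P p :&: D|%:R / #|cell P p|%:R : R) = #|D|%:R.
Proof.
have spread p : #|cell P p :&: D|%:R / #|cell P p|%:R =
    \sum_q (if (q \in D) && (p \in cell P q) then #|cell P q|%:R^-1 else 0 : R).
  rewrite mulr_natl -sumr_const big_mkcond /=; apply: eq_bigr => q _.
  rewrite inE mem_cellC andbC.
  by case: ifP => // /andP [_ /cell_eq ->].
rewrite (eq_bigr _ (fun p _ => spread p)) exchange_big /=.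
rewrite (eq_bigr (fun q => if q \in D then 1 else 0 : R)).
  by rewrite -big_mkcond /= sumr_const.
move=> q _; case: (q \in D) => /=; last by rewrite big1.
rewrite -big_mkcond /= sumr_const.
set c := #|cell P q|%:R^-1; rewrite -mulr_natr /c mulVf //.
by rewrite pnatr_eq0 -lt0n card_cell_gt0.
Qed.

Lemma card_heavy_cells (c : R) (D : {set T * T}) :
  c * #|heavy_cells P c D|%:R <= #|D|%:R.
Proof.
rewrite -(sum_cell_fraction D) (bigID (mem (heavy_cells P c D))) /=.
rewrite -[leLHS]addr0; apply: lerD; last by apply: sumr_ge0 => p _; rewrite divr_ge0.
rewrite mulr_natr -sumr_const; apply: ler_sum => p; rewrite inE => heavy.
by apply: ltW; rewrite ltr_pdivlMr // ltr0n card_cell_gt0.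
Qed.

Lemma regular_cover_perturb e e' (eps : R) :
  0 < eps -> eps <= 1 / 2 ->
  regular_cover e' eps P \subset
    regular_cover e (2 * eps) P :|: heavy_cells P (eps ^+ 3) (edge_diff e e').
Proof.
move=> eps_gt0 eps_le; case/and3P: partP => _ tiP _.
apply/subsetP => p; rewrite !inE.
case/existsP => X /andP [XP /existsP [Y /andP [YP /and3P [p1 p2 reg']]]].
rewrite ltNge; case: leP => [light|_]; rewrite ?orbT // orbF.
have cellXY : cell P p = setX X Y.
  by rewrite /cell (def_pblock tiP XP p1) (def_pblock tiP YP p2).
rewrite cellXY cardsX in light.
apply/existsP; exists X; rewrite XP; apply/existsP; exists Y; rewrite YP p1 p2 /=.
apply: (regular_pair_perturb eps_gt0 eps_le _ _ light reg').
  by apply/card_gt0P; exists p.1.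
by apply/card_gt0P; exists p.2.
Qed.

End PartitionCells.

Lemma regular_partition_perturb e e' (eps : R) P :
  0 < eps -> eps <= 1 / 2 -> graphs_close e e' (eps ^+ 4) ->
  regular_partition e' eps P -> regular_partition e (2 * eps) P.
Proof.
move=> eps_gt0 eps_le close [partP cover']; split=> //.
set n2 := (#|T| ^ 2)%:R : R.
set heavy := heavy_cells P (eps ^+ 3) (edge_diff e e').
have heavy_le : #|heavy|%:R <= eps * n2.
  rewrite -(ler_pM2l (exprn_gt0 3 eps_gt0)) mulrA -exprSr.
  exact: le_trans (card_heavy_cells partP _ _) close.
have cover_le : #|regular_cover e' eps P|%:R <=
                #|regular_cover e (2 * eps) P|%:R + #|heavy|%:R :> R.
  rewrite -natrD ler_nat -cardsUI.
  apply: leq_trans (subset_leq_card (regular_cover_perturb partP e e' eps_gt0 eps_le)) _.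
  exact: leq_addr.
rewrite -/(regular_cover e _ P) -/n2; rewrite -/(regular_cover e' _ P) -/n2 in cover'.
lra.
Qed.

End Perturbation.

Lemma le_ext_M_H (R : realType) (H H' : graph_property) (eps eps' : R) :
  (forall M, reg_bound H' eps' M -> reg_bound H eps M) ->
  le_ext (M_H H eps) (M_H H' eps').
Proof.
move=> boundHH'; rewrite /M_H.
case: (pselect (exists M, `[< reg_bound H' eps' M >])) => [exH'|_]; last by case: pselect.
case: (ex_minnP exH') => M' /asboolP boundH' _.
case: pselect => [exH|[]]; last by exists M'; apply/asboolP/boundHH'.
by case: (ex_minnP exH) => M _ /=; apply; apply/asboolP/boundHH'.
Qed.

Lemma reg_bound_close (R : realType) (H H' : graph_property) (eps : R) (M : nat) :
  close_to R H H' -> 0 < eps -> eps <= 1 / 2 ->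
  reg_bound H' eps M -> reg_bound H (2 * eps) M.
Proof.
move=> closeHH' eps_gt0 eps_le [N' boundH'].
have [N close] := closeHH' _ (exprn_gt0 4 eps_gt0).
exists (maxn N N') => T e graph_e He; rewrite geq_max => /andP [NT N'T].
have [e' [graph_e' [He' close_ee']]] := close T e graph_e He NT.
have [P [regP cardP]] := boundH' T e' graph_e' He' N'T.
by exists P; split; first exact: regular_partition_perturb eps_gt0 eps_le close_ee' regP.
Qed.

Theorem proposition3p6 (R : realType) (H H' : graph_property) :
  hereditary H -> hereditary H' -> close_to R H H' ->
  forall eps : R, 0 < eps -> eps < 1 / 2 ->
    le_ext (M_H H (2 * eps)) (M_H H' eps).
Proof.
move=> _ _ closeHH' eps eps_gt0 eps_lt.
by apply: le_ext_M_H => M; apply: reg_bound_close closeHH' eps_gt0 (ltW eps_lt).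
Qed.
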